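(* Let $N$ be a finite set, $C\subseteq N$ with $|C|\ge2$, and $k\in\{1,\ldots,|C|-1\}$. Then the generalized cluster inequality $$\sum_{a\in C}\ \sum_{B\subseteq N\setminus\{a\}:\,|B\cap C|\ge k}\eta(a|B)\le |C|-k$$ defines an SE facet of the family-variable polytope $P_N$.
   Context: $\mathrm{DAG}(N)$ is the set of acyclic directed graphs over $N$; $\mathrm{pa}_G(a)$ is the parent set of $a$ in $G$; $G\sim H$ (Markov equivalence) means same adjacencies and same immoralities (induced $a\to c\leftarrow b$ with $a,b$ non-adjacent). $\Upsilon=\{(a|B): a\in N,\ \emptyset\neq B\subseteq N\setminus\{a\}\}$; $\eta_G\in\mathbb{R}^{\Upsilon}$ has $\eta_G(a|B)=1$ if $B=\mathrm{pa}_G(a)$, else $0$; $P_N=\mathrm{conv}\{\eta_G:G\in\mathrm{DAG}(N)\}$. $o$ is an SE objective if $\langle o,\eta_G\rangle=\langle o,\eta_H\rangle$ whenever $G\sim H$; a facet $F$ of $P_N$ is SE if there exist an SE objective $o$ and $u$ with $P_N\subseteq\{v:\langle o,v\rangle\le u\}$ and $F=\{v\in P_N:\langle o,v\rangle=u\}$. *)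

From HB Require Import structures.
From mathcomp Require Import all_boot all_order all_algebra.
Set Implicit Arguments. Unset Strict Implicit. Unset Printing Implicit Defensive.
Import Order.TTheory GRing.Theory Num.Theory.
Local Open Scope ring_scope.

Section Defs.
Variable N : finType.

(* A directed graph over N, given by its parent sets: pa a = pa_G(a). *)
Definition graph := {ffun N -> {set N}}.

Definition edge (G : graph) : rel N := fun x y => x \in G y.

Definition is_DAG (G : graph) : bool :=
  [forall x, forall y, ~~ (edge G x y && connect (edge G) y x)].

Definition adjacent (G : graph) (x y : N) : bool := edge G x y || edge G y x.

Definition immorality (G : graph) (a c b : N) : bool :=
  [&& a != b, edge G a c, edge G b c & ~~ adjacent G a b].

Definition markov_equiv (G H : graph) : Prop :=
  (forall x y, adjacent G x y = adjacent H x y) /\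
  (forall a c b, immorality G a c b = immorality H a c b).

Definition Ups := {x : N * {set N} | (x.2 != set0) && (x.1 \notin x.2)}.

Variable R : realFieldType.

Definition vec := Ups -> R.

Definition dot (o v : vec) : R := \sum_(x : Ups) o x * v x.

Definition eta (G : graph) : vec :=
  fun x => if (val x).2 == G (val x).1 then 1 else 0.

Definition P_N : vec -> Prop := fun v =>
  exists lam : graph -> R,
    (forall G, 0 <= lam G) /\
    (\sum_(G | is_DAG G) lam G = 1) /\
    (forall x, v x = \sum_(G | is_DAG G) lam G * eta G x).

Definition SE_objective (o : vec) : Prop :=
  forall G H, is_DAG G -> is_DAG H -> markov_equiv G H -> dot o (eta G) = dot o (eta H).

Definition has_aff_indep (S : vec -> Prop) (n : nat) : Prop :=
  exists p : 'I_n -> vec, (forall i, S (p i)) /\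
    (forall c : 'I_n -> R, \sum_i c i = 0 -> (forall x, \sum_i c i * p i x = 0) ->
       forall i, c i = 0).

(* the maximal number of affinely independent points of S is n,
   i.e. dim aff(S) = n - 1 *)
Definition aff_rank (S : vec -> Prop) (n : nat) : Prop :=
  has_aff_indep S n /\ ~ has_aff_indep S n.+1.

Definition valid_ineq (o : vec) (u : R) : Prop := forall v, P_N v -> dot o v <= u.

Definition face_of (o : vec) (u : R) : vec -> Prop := fun v => P_N v /\ dot o v = u.

Definition set_eq (F F' : vec -> Prop) : Prop := forall v, F v <-> F' v.

Definition is_facet (F : vec -> Prop) : Prop :=
  (exists o u, valid_ineq o u /\ set_eq F (face_of o u)) /\
  (exists n, aff_rank P_N n.+1 /\ aff_rank F n).

Definition is_SE_facet (F : vec -> Prop) : Prop :=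
  is_facet F /\
  exists o u, SE_objective o /\ valid_ineq o u /\ set_eq F (face_of o u).

Definition cluster_obj (C : {set N}) (k : nat) : vec :=
  fun x => if ((val x).1 \in C) && (k <= #|(val x).2 :&: C|)%N then 1 else 0.

End Defs.

(* Validity: a DAG has a sink in C, a parent of no other node of C; removing it and
   inducting shows that at most #|C| - k nodes of C have k parents in C, and these nodes
   are what the left-hand side counts at eta_G.
   SE: Markov equivalent DAGs have the same characteristic imset, and the number of
   j.+1-subsets of C in its support is the sum over v in C of 'C(#|pa v :&: C|, j).
   Inverting this binomial transform, the distribution of #|pa v :&: C| over C, and with
   it the left-hand side, is Markov invariant.
   Facet: the empty graph and the single-parent-set graphs give dim P_N = #|Ups|. An
   ordering of C yields a tight DAG (the first k nodes are parentless, every later node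
   has all earlier ones as parents). Comparing tight DAGs that differ at one node, or at
   two nodes swapped in the ordering, shows that an affine function constant on the tight
   vertices is a multiple of the cluster objective, so the face has dimension #|Ups| - 1. *)

From Pilot Require Import Defs.
From HB Require Import structures.
From mathcomp Require Import all_boot all_order all_algebra zify.
Import Order.TTheory GRing.Theory Num.Theory.
Set Implicit Arguments. Unset Strict Implicit. Unset Printing Implicit Defensive.

Section Acyclic.
Variable N : finType.
Implicit Types (G : graph N) (T : {set N}).

Lemma rank_DAG G (r : N -> nat) : (forall u v, u \in G v -> r u < r v) -> is_DAG G.
Proof.
move=> r_lt; apply/forallP => x; apply/forallP => y; apply/negP.
move=> /andP[exy /connectP[p pth lst]].
have rank_path z q : path (edge G) z q -> r z <= r (last z q).
  elim: q z => //= z' q IHq z /andP[e pz'].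
  exact: leq_trans (ltnW (r_lt _ _ e)) (IHq _ pz').
by have := leq_trans (r_lt _ _ exy) (rank_path _ _ pth); rewrite -lst ltnn.
Qed.

Lemma DAG_irrefl G v : is_DAG G -> v \notin G v.
Proof. by move=> /forallP/(_ v)/forallP/(_ v); rewrite connect0 andbT. Qed.

Lemma DAG_asym G x y : is_DAG G -> x \in G y -> y \notin G x.
Proof.
move=> /forallP/(_ x)/forallP/(_ y) nocycle exy; apply/negP => eyx.
by move: nocycle; rewrite /edge exy connect1.
Qed.

(* Take s in T with the fewest descendants: a child of s in T would have fewer. *)
Lemma DAG_sink G T : is_DAG G -> T != set0 ->
  exists2 s, s \in T & forall y, y \in T -> s \notin G y.
Proof.
move=> dagG /set0Pn[s0 s0T].
pose desc x := #|[set z | connect (edge G) x z]|.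
have [s sT s_min] := arg_minnP desc s0T.
exists s => // y yT; apply/negP => esy.
have := s_min y yT; rewrite leqNgt => /negP; apply; apply: proper_card.
apply/properP; split.
  by apply/subsetP => z; rewrite !inE; apply: connect_trans; apply: connect1.
exists s; first by rewrite inE connect0.
rewrite inE; apply/negP => ys.
by have /negP := forallP (forallP dagG s) y; apply; rewrite /edge esy.
Qed.

End Acyclic.

Section HighCount.
Variable N : finType.
Variable k : nat.
Implicit Types (G : graph N) (D : {set N}).

Definition high_in G D v := (v \in D) && (k <= #|G v :&: D|).

Lemma high_in_sink G D s : (forall y, y \in D -> s \notin G y) ->
  [set v | high_in G D v] \subset s |: [set v | high_in G (D :\ s) v].
Proof.
move=> sink; apply/subsetP => v; rewrite !inE /high_in.
have [-> //|vs /andP[vD kv]] := eqVneq v s.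
rewrite !inE vs vD /=; suff -> : G v :&: (D :\ s) = G v :&: D by [].
apply/setP => z; rewrite !inE; have [->|] //= := eqVneq z s.
by rewrite (negbTE (sink v vD)).
Qed.

(* Induction on #|D|, removing a sink of D; once #|D| <= k, acyclicity leaves no high node. *)
Lemma card_high_in G D : is_DAG G -> #|[set v | high_in G D v]| <= #|D| - k.
Proof.
move=> dagG; elim: {D}#|D| {-2}D (eqxx #|D|) => [|n IHn] D /eqP cardD.
  move/eqP: cardD; rewrite cards_eq0 => /eqP->; rewrite cards0 sub0n leqn0 cards_eq0.
  by apply/eqP/setP => v; rewrite !inE /high_in inE.
have [lenk|ltkn] := leqP n.+1 k.
  rewrite cardD (eqP lenk) leqn0 cards_eq0; apply/eqP/setP => v; rewrite !inE /high_in.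
  apply/negP => /andP[vD kv].
  have GvD : G v :&: D = D.
    by apply/eqP; rewrite eqEcard subsetIr cardD (leq_trans lenk kv).
  by move: vD; rewrite -GvD inE (negbTE (DAG_irrefl v dagG)).
have D0 : D != set0 by rewrite -card_gt0 cardD.
have [s sD sink] := DAG_sink dagG D0.
have cardDs : #|D :\ s| == n by move: cardD; rewrite (cardsD1 s D) sD add1n => -[->].
apply: leq_trans (subset_leq_card (high_in_sink sink)) _.
rewrite cardsU1; apply: leq_trans (leq_add (leq_b1 _) (IHn _ cardDs)) _.
by rewrite cardD; lia.
Qed.

End HighCount.

Section CharImset.
Variable N : finType.
Implicit Types (G H : graph N) (T : {set N}).

(* Support of Studeny's characteristic imset of G: some a in T has all of T :\ a as parents. *)
Definition charimset G T := [exists a in T, T :\ a \subset G a].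

Lemma charimset_top_uniq G T a b : is_DAG G -> a \in T -> b \in T ->
  T :\ a \subset G a -> T :\ b \subset G b -> a = b.
Proof.
move=> dagG aT bT /subsetP Ta /subsetP Tb; apply/eqP/negPn/negP => ab.
have bGa : b \in G a by apply: Ta; rewrite !inE eq_sym ab.
have aGb : a \in G b by apply: Tb; rewrite !inE ab.
by move: (DAG_asym dagG bGa); rewrite aGb.
Qed.

(* The top of T in H must be its sink s: a pair y, s non-adjacent in H would form an
   immorality at the top of T in G. *)
Lemma charimset_markov G H T : is_DAG G -> is_DAG H -> markov_equiv G H ->
  charimset G T -> charimset H T.
Proof.
move=> dagG dagH [adjGH imGH] /existsP[a /andP[aT /subsetP Ta]].
have T0 : T != set0 by apply/set0Pn; exists a.
have [s sT sink] := DAG_sink dagH T0.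
apply/existsP; exists s; rewrite sT /=; apply/subsetP => y; rewrite in_setD1 => /andP[ys yT].
suff : adjacent H y s by case/orP => // esy; move: (sink y yT); rewrite /edge in esy; rewrite esy.
have Ta' z : z \in T -> z != a -> z \in G a by move=> zT za; apply: Ta; rewrite !inE za.
rewrite -adjGH /adjacent /edge.
have [ya | ya] := eqVneq y a; first by subst y; rewrite (Ta' s) ?orbT // eq_sym.
have [sa | sa] := eqVneq s a; first by subst s; rewrite (Ta' y).
apply/negPn/negP => nadj.
have : immorality G s a y by rewrite /immorality eq_sym ys /edge !Ta' // /adjacent /edge orbC.
by rewrite imGH => /and4P[_ esa _ _]; move: (sink a aT); rewrite /edge in esa; rewrite esa.
Qed.

Variable C : {set N}.

(* A j.+1-subset of C in the support is v |: S, with v its unique top and S a j-subset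
   of G v :&: C. *)
Lemma card_charimset G (j : nat) : is_DAG G ->
  #|[set T : {set N} | [&& T \subset C, #|T| == j.+1 & charimset G T]]| =
  \sum_(v in C) 'C(#|G v :&: C|, j).
Proof.
move=> dagG.
pose splits := [set vS : N * {set N} | [&& vS.1 \in C, vS.2 \subset G vS.1 :&: C & #|vS.2| == j]].
have split_props vS : vS \in splits ->
    [/\ vS.1 \in C, vS.2 \subset C, #|vS.2| = j, vS.1 \notin vS.2 & vS.2 \subset G vS.1].
  case: vS => v S; rewrite inE subsetI /= => /and3P[vC /andP[SG SC] /eqP cardS].
  split=> //; apply/negP => /(subsetP SG); exact/negP/DAG_irrefl.
have -> : [set T : {set N} | [&& T \subset C, #|T| == j.+1 & charimset G T]] =
          [set vS.1 |: vS.2 | vS in splits].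
  apply/setP => T; rewrite inE; apply/idP/imsetP.
    case/and3P=> TC cardT /existsP[a /andP[aT Ta]]; exists (a, T :\ a); last by rewrite /= setD1K.
    rewrite inE /= (subsetP TC) // subsetI Ta (subset_trans (subsetDl _ _) TC) /=.
    by move: cardT; rewrite (cardsD1 a) aT.
  case=> -[v S] /split_props[/= vC SC cardS vS SG] ->.
  rewrite subUset sub1set vC SC cardsU1 vS cardS add1n eqxx /=.
  by apply/existsP; exists v; rewrite setU11 setU1K.
rewrite card_in_imset; last first.
  move=> [v S] [v' S'] /split_props[/= _ _ _ vS SG] /split_props[/= _ _ _ v'S' S'G] /= eqT.
  have vv' : v = v'.
    apply: (charimset_top_uniq (T := v |: S)) dagG _ _ _ _; rewrite ?setU11 ?setU1K //.
      by rewrite eqT setU11.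
    by rewrite eqT setU1K.
  by subst v'; move: eqT => /(congr1 (fun T => T :\ v)); rewrite !setU1K // => ->.
have -> : #|splits| = \sum_(v in C) \sum_(S : {set N} | (S \subset G v :&: C) && (#|S| == j)) 1.
  by rewrite pair_big_dep sum1dep_card.
by apply: eq_bigr => v _; rewrite sum1dep_card cards_draws.
Qed.

End CharImset.

Lemma sum_binomial_split (h : nat -> nat) M i : i <= M ->
  \sum_(l < M.+1) h l * 'C(l, i) = h i + \sum_(l < M.+1 | i < l) h l * 'C(l, i).
Proof.
move=> leiM; rewrite (bigD1 (inord i)) /= ?inordK ?binn ?muln1 //; congr (_ + _).
rewrite big_mkcond [RHS]big_mkcond; apply: eq_bigr => l _; rewrite -val_eqE /= inordK //.
by case: ltngtP => // ltli; rewrite bin_small ?muln0.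
Qed.

(* Downward induction on i: the j = i equation involves only f i and the f l with l > i. *)
Lemma binomial_transform_inj (f g : nat -> nat) M :
  (forall j, \sum_(l < M.+1) f l * 'C(l, j) = \sum_(l < M.+1) g l * 'C(l, j)) ->
  forall i, i <= M -> f i = g i.
Proof.
move=> eq_fg i leiM; move: {-1}(M - i) (leqnn (M - i)) => d.
elim: d i leiM => [|d IHd] i leiM leMi.
  have -> : i = M by lia.
  have := eq_fg M; rewrite !sum_binomial_split // !big_pred0 => [/addIn //|l|l];
  by rewrite ltnNge -ltnS ltn_ord.
have := eq_fg i; rewrite !sum_binomial_split //.
rewrite (eq_bigr (fun l : 'I_M.+1 => g l * 'C(l, i))) => [/addIn //|l ltil].
by have ltlM := ltn_ord l; rewrite IHd //; lia.
Qed.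

Section MarkovInvariance.
Variable N : finType.
Variable C : {set N}.
Implicit Types G H : graph N.

Definition deg_count G i := #|[set v in C | #|G v :&: C| == i]|.

Lemma sum_over_degrees G (F : nat -> nat) :
  \sum_(v in C) F #|G v :&: C| = \sum_(i < #|C|.+1) deg_count G i * F i.
Proof.
have degP v : #|G v :&: C| < #|C|.+1 by rewrite ltnS subset_leq_card ?subsetIr.
rewrite (partition_big (fun v => Ordinal (degP v)) xpredT) //=.
apply: eq_bigr => i _; rewrite -sum_nat_cond_const /deg_count.
apply: eq_big => [v|v /andP[_]]; first by rewrite -val_eqE.
by move=> /eqP <-.
Qed.

Lemma deg_count_markov G H i : is_DAG G -> is_DAG H -> markov_equiv G H ->
  i <= #|C| -> deg_count G i = deg_count H i.
Proof.
move=> dagG dagH eqGH; apply: binomial_transform_inj => j.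
rewrite -!(sum_over_degrees _ (fun l => 'C(l, j))) -!card_charimset //.
apply: eq_card => T; rewrite !inE.
have [eqHG_adj eqHG_imm] := eqGH.
have eqHG : markov_equiv H G by split=> *; rewrite ?eqHG_adj ?eqHG_imm.
by congr [&& _, _ & _]; apply/idP/idP; apply: charimset_markov.
Qed.

End MarkovInvariance.

Section TightDAGs.
Variable N : finType.
Variable C : {set N}.
Variable k : nat.
Implicit Types (G H : graph N) (s : seq N) (B D P : {set N}).

Definition n_high G := #|[set v | high_in k G C v]|.

Lemma n_high_markov G H : is_DAG G -> is_DAG H -> markov_equiv G H -> n_high G = n_high H.
Proof.
move=> dagG dagH eqGH.
have n_highE K : n_high K = \sum_(i < #|C|.+1) deg_count C K i * (k <= i).
  rewrite -(@sum_over_degrees _ C K (fun i => nat_of_bool (k <= i))).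
  rewrite /n_high -sum1dep_card big_mkcondr.
  by apply: eq_bigr => v _; case: ifP.
rewrite !n_highE; apply: eq_bigr => i _.
by rewrite (deg_count_markov dagG dagH eqGH) // -ltnS.
Qed.

Definition tight G := is_DAG G && (n_high G == #|C| - k).

Definition order_dag s : graph N := [ffun v =>
  if (v \in C) && (k <= index v s) then [set u in C | index u s < index v s] else set0].

Definition set_pa G a (P : {set N}) : graph N := [ffun v => if v == a then P else G v].

Definition agree_off (A : {set N}) G1 G2 := forall v, v \notin A -> G1 v = G2 v.

Hypothesis k_gt0 : 0 < k.
Hypothesis k_ltC : k < #|C|.

Section OrderOfC.
Variable s : seq N.
Hypothesis s_uniq : uniq s.
Hypothesis s_C : s =i C.

Lemma size_order : size s = #|C|.
Proof. by rewrite -(card_uniqP s_uniq); apply: eq_card. Qed.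

Lemma card_prefix i : i <= size s -> #|[set u in C | index u s < i]| = i.
Proof.
move=> leis; rewrite -[RHS](size_takel leis) -(card_uniqP (take_uniq i s_uniq)).
apply: eq_card => u; rewrite inE -s_C in_take_leq //.
by case: (boolP (u \in s)) => // /memNindex->; rewrite ltnNge leis.
Qed.

Lemma high_in_order_dag v : high_in k (order_dag s) C v = (v \in C) && (k <= index v s).
Proof.
rewrite /high_in ffunE; case: (boolP (v \in C)) => //= vC.
case: (leqP k (index v s)) => [kv|_]; last by rewrite set0I cards0 leqNgt k_gt0.
rewrite (setIidPl _) ?card_prefix ?index_size //.
by apply/subsetP => u; rewrite inE => /andP[].
Qed.

Lemma order_dag_tight : tight (order_dag s).
Proof.
apply/andP; split.
  apply: (@rank_DAG _ _ (index^~ s)) => u v.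
  by rewrite ffunE; case: ifP; rewrite inE // => _ /andP[].
rewrite /n_high.
have -> : [set v | high_in k (order_dag s) C v] = C :\: [set u in C | index u s < k].
  apply/setP => v; rewrite !inE high_in_order_dag leqNgt.
  by case: (v \in C); rewrite ?andbT.
have prefC : [set u in C | index u s < k] \subset C by apply/subsetP => u; rewrite inE => /andP[].
by apply/eqP; rewrite cardsD (setIidPr prefC) card_prefix // size_order ltnW.
Qed.

End OrderOfC.

Lemma set_pa_DAG G a P (r : N -> nat) :
  (forall u v, v != a -> u \in G v -> r u < r v) -> (forall u, u \in P -> r u < r a) ->
  is_DAG (set_pa G a P).
Proof.
move=> rG rP; apply: (@rank_DAG _ _ r) => u v; rewrite ffunE.
by have [->|va] := eqVneq v a; [exact: rP | exact: rG].
Qed.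

Lemma set_pa_tight G a P : tight G -> is_DAG (set_pa G a P) ->
  high_in k (set_pa G a P) C a = high_in k G C a -> tight (set_pa G a P).
Proof.
case/andP=> _ nG dagGa eqa; rewrite /tight dagGa -(eqP nG) /n_high /=; apply/eqP/eq_card => v.
by rewrite !inE; have [->|va] := eqVneq v a; rewrite // /high_in ffunE (negbTE va).
Qed.

Lemma agree_off_set_pa G a P P' : agree_off [set a] (set_pa G a P) (set_pa G a P').
Proof. by move=> v; rewrite inE !ffunE => /negbTE->. Qed.

Definition order_after D a := enum D ++ a :: enum (C :\: D :\ a).

Lemma order_after_props D a : a \in C -> D \subset C :\ a ->
  [/\ uniq (order_after D a), order_after D a =i C, index a (order_after D a) = #|D|
    & forall u, u \in D -> index u (order_after D a) < #|D|].
Proof.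
move=> aC DCa; have aD : a \notin D by apply/negP => /(subsetP DCa); rewrite !inE eqxx.
split.
- rewrite cat_uniq enum_uniq /= mem_enum (negbTE aD) mem_enum !inE eqxx enum_uniq /= andbT.
  by apply/hasPn => u; rewrite !mem_enum !inE => /and3P[].
- move=> v; rewrite mem_cat inE !mem_enum !inE.
  have [->|va] //= := eqVneq v a; first by rewrite aC orbT.
  by case vD: (v \in D) => //=; move: (subsetP DCa v vD); rewrite !inE => /andP[_ ->].
- by rewrite index_cat mem_enum (negbTE aD) /= eqxx addn0 cardE.
- by move=> u uD; rewrite index_cat mem_enum uD cardE index_mem mem_enum.
Qed.

(* a is placed right after D, so a can receive any parent set with its C-part in D. *)
Lemma order_after_set_pa_tight D a P : a \in C -> D \subset C :\ a -> a \notin P ->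
  P :&: C \subset D -> (k <= #|P :&: C|) = (k <= #|D|) ->
  tight (set_pa (order_dag (order_after D a)) a P).
Proof.
move=> aC DCa aP PCD eq_high; have [s_uniq s_C ia iD] := order_after_props aC DCa.
set s := order_after D a in s_uniq s_C ia iD *.
apply: set_pa_tight; first exact: order_dag_tight.
  apply: (@set_pa_DAG _ _ _ (fun v => if v \in C then (index v s).+1 else 0)) => [u v _|u uP].
    by rewrite ffunE; case: ifP; rewrite !inE // => /andP[-> _] /andP[-> ltuv].
  rewrite aC ia; case: ifP => // uC.
  by rewrite ltnS iD //; apply: (subsetP PCD); rewrite inE uP.
by rewrite high_in_order_dag // /high_in ffunE eqxx aC ia.
Qed.

Lemma exchange_outside a B : a \notin C -> a \notin B ->
  exists G1 G2, [/\ tight G1, tight G2, agree_off [set a] G1 G2, G1 a = set0 & G2 a = B].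
Proof.
move=> aC aB; set G := order_dag (enum C).
have tightG P : a \notin P -> tight (set_pa G a P).
  move=> aP; apply: set_pa_tight.
  - by apply: order_dag_tight; [exact: enum_uniq | exact: mem_enum].
  - apply: (@set_pa_DAG _ _ _ (fun v => if v == a then #|C|.+1 else index v (enum C))).
      move=> u v /negbTE->; rewrite ffunE; case: ifP; rewrite !inE // => _ /andP[uC].
      by case: eqVneq uC => [->|]; rewrite ?(negbTE aC).
    move=> u uP; case: eqVneq uP => [->|_ _]; first by rewrite (negbTE aP).
    by rewrite eqxx ltnS cardE index_size.
  - by rewrite /high_in (negbTE aC).
exists (set_pa G a set0), (set_pa G a B).
by rewrite !tightG ?inE // !ffunE eqxx; split=> //; apply: agree_off_set_pa.
Qed.

Lemma exchange_low a B : a \in C -> a \notin B -> #|B :&: C| < k ->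
  exists G1 G2, [/\ tight G1, tight G2, agree_off [set a] G1 G2, G1 a = set0 & G2 a = B].
Proof.
move=> aC aB ltBk; set G := order_dag (order_after (B :&: C) a).
have BCa : B :&: C \subset C :\ a.
  by apply/subsetP => u; rewrite !inE => /andP[uB ->]; case: eqVneq uB aB => // ->->.
exists (set_pa G a set0), (set_pa G a B); rewrite !ffunE eqxx; split=> //.
- apply: order_after_set_pa_tight => //; rewrite ?inE ?set0I ?sub0set //.
  by rewrite cards0 leqNgt k_gt0 leqNgt ltBk.
- exact: order_after_set_pa_tight.
- exact: agree_off_set_pa.
Qed.

Lemma exchange_high a B B' : a \in C -> a \notin B -> a \notin B' ->
  k <= #|B :&: C| -> k <= #|B' :&: C| ->
  exists G1 G2, [/\ tight G1, tight G2, agree_off [set a] G1 G2, G1 a = B & G2 a = B'].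
Proof.
move=> aC aB aB' leBk leB'k; set D := (B :|: B') :&: C.
have DCa : D \subset C :\ a.
  apply/subsetP => u; rewrite !inE => /andP[uBB' ->].
  by case: eqVneq uBB' => // ->; rewrite (negbTE aB) (negbTE aB').
have tightP P : a \notin P -> P \subset B :|: B' -> k <= #|P :&: C| ->
    tight (set_pa (order_dag (order_after D a)) a P).
  move=> aP PBB' lePk; apply: order_after_set_pa_tight; rewrite ?setSI //.
  by rewrite lePk (leq_trans lePk) // subset_leq_card // setSI.
exists (set_pa (order_dag (order_after D a)) a B), (set_pa (order_dag (order_after D a)) a B').
by rewrite !tightP ?subsetUl ?subsetUr // !ffunE eqxx; split=> //; apply: agree_off_set_pa.
Qed.

Lemma index_transpose (p q : seq N) x y u v : v != x -> v != y ->
  (index u (p ++ x :: y :: q) < index v (p ++ x :: y :: q)) =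
  (index u (p ++ y :: x :: q) < index v (p ++ y :: x :: q)).
Proof.
move=> vx vy; rewrite !index_cat /= !(eq_sym x v) !(eq_sym y v) (negbTE vx) (negbTE vy).
have [vp|_] := boolP (v \in p); case: (u \in p) => //=.
  by rewrite -index_mem in vp; rewrite !ltnNge !(leq_trans (ltnW vp) (leq_addr _ _)).
by rewrite !ltn_add2l; case: (x == u); case: (y == u).
Qed.

Lemma index_transpose_neq (p q : seq N) x y v : v != x -> v != y ->
  index v (p ++ x :: y :: q) = index v (p ++ y :: x :: q).
Proof.
by move=> vx vy; rewrite !index_cat /= !(eq_sym x v) !(eq_sym y v) (negbTE vx) (negbTE vy).
Qed.

Lemma order_dag_transpose (p q : seq N) x y v : v != x -> v != y ->
  order_dag (p ++ x :: y :: q) v = order_dag (p ++ y :: x :: q) v.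
Proof.
move=> vx vy; rewrite !ffunE index_transpose_neq //; case: ifP => // _.
by apply/setP => u; rewrite !inE -{1}(index_transpose_neq p q vx vy) index_transpose.
Qed.

(* a' and a sit at positions k.-1 and k; swapping them makes a' high and a parentless. *)
Lemma exchange_transposition a a' : a \in C -> a' \in C -> a != a' ->
  exists G1 G2, [/\ tight G1, tight G2, agree_off [set a; a'] G1 G2, G1 a' = set0 & G2 a = set0]
    /\ high_in k G1 C a && high_in k G2 C a'.
Proof.
move=> aC a'C aa'; set r := enum (C :\ a :\ a').
set p := take k.-1 r; set q := drop k.-1 r.
have ar : a \notin r by rewrite mem_enum !inE eqxx andbF.
have a'r : a' \notin r by rewrite mem_enum !inE eqxx.
have ap : a \notin p by apply: contra ar; apply: mem_take.
have a'p : a' \notin p by apply: contra a'r; apply: mem_take.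
have size_p : size p = k.-1.
  rewrite size_takel // -cardE; move: (cardsD1 a C) (cardsD1 a' (C :\ a)).
  by rewrite aC !inE eq_sym aa' a'C; lia.
set s := p ++ a' :: a :: q; set s' := p ++ a :: a' :: q.
have s_perm : perm_eq s (a' :: a :: r).
  by rewrite -(cat_take_drop k.-1 r); exact/permPl/(perm_catCA p [:: a'; a] q).
have s's : perm_eq s' s by rewrite perm_cat2l; exact/permPl/(perm_catCA [:: a] [:: a'] q).
have s_uniq : uniq s.
  by rewrite (perm_uniq s_perm) /= in_cons negb_or eq_sym aa' a'r ar enum_uniq.
have s_C : s =i C.
  move=> v; rewrite (perm_mem s_perm) !inE mem_enum !inE.
  case: (eqVneq v a') => [->|_]; first by rewrite a'C.
  by case: (eqVneq v a) => [->|_]; rewrite ?aC.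
have s'_uniq : uniq s' by rewrite (perm_uniq s's).
have s'_C : s' =i C by move=> v; rewrite (perm_mem s's).
have index_pair x y : x \notin p -> y \notin p -> x != y ->
    index x (p ++ x :: y :: q) = k.-1 /\ index y (p ++ x :: y :: q) = k.
  move=> xp yp xy; rewrite !index_cat (negbTE xp) (negbTE yp) /= eqxx (negbTE xy) eqxx.
  by rewrite size_p addn0 addn1 prednK.
have a'a : a' != a by rewrite eq_sym.
have [ia's ias] := index_pair _ _ a'p ap a'a.
have [ias' ia's'] := index_pair _ _ ap a'p aa'.
exists (order_dag s), (order_dag s'); split; first split.
- exact: order_dag_tight.
- exact: order_dag_tight.
- by move=> v; rewrite !inE negb_or => /andP[va va']; apply: order_dag_transpose.
- by rewrite ffunE -/s ia's leqNgt ltn_predL k_gt0 andbF.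
- by rewrite ffunE -/s' ias' leqNgt ltn_predL k_gt0 andbF.
by rewrite !high_in_order_dag // aC a'C ias ia's' leqnn.
Qed.

End TightDAGs.

Local Open Scope ring_scope.

Section FamilyVectors.
Variable N : finType.
Variable R : realFieldType.
Implicit Types (G H : graph N) (w : vec N R) (B : {set N}).

Definition fam_coef w a B : R := oapp w 0 (insub (a, B)).

Lemma fam_coef_val w (x : Ups N) : fam_coef w (val x).1 (val x).2 = w x.
Proof. by rewrite /fam_coef -surjective_pairing valK. Qed.

Lemma fam_coef0 w a : fam_coef w a set0 = 0.
Proof. by rewrite /fam_coef insubF //= eqxx. Qed.

Lemma fam_coef_neq0 w a B : fam_coef w a B != 0 -> exists x, w x != 0.
Proof. by rewrite /fam_coef; case: insubP => [x _ _ wx|_]; [exists x | rewrite eqxx]. Qed.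

Lemma dot_eta w G : dot w (Defs.eta R G) = \sum_v fam_coef w v (G v).
Proof.
rewrite /dot (partition_big (fun x : Ups N => (val x).1) xpredT) //=; apply: eq_bigr => v _.
rewrite (eq_bigr (fun x : Ups N => (val x == (v, G v))%:R * w x)); last first.
  move=> [[a B] Px] /= /eqP <-; rewrite /Defs.eta /= xpair_eqE eqxx /= mulrC.
  by case: eqP.
rewrite /fam_coef; case: insubP => [y _ yE|notUps] /=.
  rewrite (bigD1 y) /= ?yE ?eqxx ?mul1r ?big1 ?addr0 // => x /andP[_ xy].
  by rewrite -yE (inj_eq val_inj) (negbTE xy) mul0r.
rewrite big1 // => x _; case: eqP => [xv|]; last by rewrite mul0r.
by move: notUps; rewrite -xv (valP x).
Qed.

Lemma dot_eta_agree w (A : {set N}) G1 G2 : agree_off A G1 G2 ->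
  dot w (Defs.eta R G1) - dot w (Defs.eta R G2) =
  \sum_(v in A) (fam_coef w v (G1 v) - fam_coef w v (G2 v)).
Proof.
move=> agree; rewrite !dot_eta -sumrB (bigID (mem A)) /= [X in _ + X]big1 ?addr0 // => v vA.
by rewrite agree ?subrr.
Qed.

Lemma eta_PN G : is_DAG G -> P_N (Defs.eta R G).
Proof.
move=> dagG; exists (fun H => (H == G)%:R); split; first by move=> H; rewrite ler0n.
split; last move=> x.
  by rewrite (bigD1 G) //= eqxx big1 ?addr0 // => H /andP[_ /negbTE->].
by rewrite (bigD1 G) //= eqxx mul1r big1 ?addr0 // => H /andP[_ /negbTE->]; rewrite mul0r.
Qed.

Lemma valid_ineq_of_DAG (o : vec N R) u :
  (forall G, is_DAG G -> dot o (Defs.eta R G) <= u) -> valid_ineq o u.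
Proof.
move=> le_u v [lam [lam_ge0 [lam_sum1 vE]]].
have -> : dot o v = \sum_(G | is_DAG G) lam G * dot o (Defs.eta R G).
  rewrite /dot (eq_bigr (fun x => \sum_(G | is_DAG G) lam G * (o x * Defs.eta R G x))).
    by rewrite exchange_big; apply: eq_bigr => G _; rewrite mulr_sumr.
  by move=> x _; rewrite vE mulr_sumr; apply: eq_bigr => G _; rewrite mulrCA.
apply: le_trans (_ : \sum_(G | is_DAG G) lam G * u <= u).
  by apply: ler_sum => G dagG; apply: ler_wpM2l; [exact: lam_ge0 | exact: le_u].
by rewrite -big_distrl /= lam_sum1 mul1r.
Qed.

End FamilyVectors.

Section ClusterInequality.
Variable N : finType.
Variable R : realFieldType.
Variable C : {set N}.
Variable k : nat.
Hypothesis k_gt0 : (0 < k)%N.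
Implicit Types (G H : graph N) (B : {set N}).
Notation o := (cluster_obj R C k).
Notation u := ((#|C| - k)%:R : R).

Lemma fam_coef_cluster a B :
  fam_coef o a B = [&& a \notin B, a \in C & (k <= #|B :&: C|)%N]%:R.
Proof.
rewrite /fam_coef; case: insubP => [x /andP[_ aB] xE|] /=.
  by rewrite /cluster_obj xE aB /=; case: ifP.
rewrite negb_and !negbK => /orP[/eqP->|->] //.
by rewrite set0I cards0 leqNgt k_gt0 !andbF.
Qed.

Lemma dot_cluster_eta G : is_DAG G -> dot o (Defs.eta R G) = (n_high C k G)%:R.
Proof.
move=> dagG; rewrite dot_eta /n_high -sum1dep_card natr_sum [RHS]big_mkcond /=.
by apply: eq_bigr => v _; rewrite fam_coef_cluster (DAG_irrefl v dagG) /high_in /=; case: (_ && _).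
Qed.

Lemma cluster_valid : valid_ineq o u.
Proof.
by apply: valid_ineq_of_DAG => G dagG; rewrite dot_cluster_eta // ler_nat card_high_in.
Qed.

Lemma cluster_SE : SE_objective o.
Proof.
by move=> G H dagG dagH eqGH; rewrite !dot_cluster_eta // (n_high_markov C k dagG dagH eqGH).
Qed.

Lemma tight_face G : tight C k G -> face_of o u (Defs.eta R G).
Proof. by case/andP=> dagG /eqP nG; split; [exact: eta_PN | rewrite dot_cluster_eta // nG]. Qed.

Hypothesis k_ltC : (k < #|C|)%N.

Lemma high_setD1 a : a \in C -> (k <= #|(C :\ a) :&: C|)%N.
Proof. by move=> aC; move: k_ltC; rewrite (setIidPl (subsetDl _ _)) (cardsD1 a C) aC. Qed.

Lemma cluster_obj_neq0 : exists x, o x != 0.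
Proof.
have [a aC] : exists a, a \in C by apply/set0Pn; rewrite -card_gt0 (leq_trans _ k_ltC).
apply: (@fam_coef_neq0 _ _ _ a (C :\ a)).
by rewrite fam_coef_cluster !inE eqxx aC high_setD1 ?oner_eq0.
Qed.

Section TightConstant.
Variable w : vec N R.
Variable t : R.
Hypothesis w_tight : forall G, tight C k G -> dot w (Defs.eta R G) = t.

Lemma fam_coef_agree G1 G2 (A : {set N}) : tight C k G1 -> tight C k G2 ->
  agree_off A G1 G2 -> \sum_(v in A) fam_coef w v (G1 v) = \sum_(v in A) fam_coef w v (G2 v).
Proof.
move=> tG1 tG2 agree; apply/eqP; rewrite -subr_eq0 -sumrB -dot_eta_agree //.
by rewrite !w_tight // subrr.
Qed.

Lemma fam_coef_exchange a B B' : (exists G1 G2,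
    [/\ tight C k G1, tight C k G2, agree_off [set a] G1 G2, G1 a = B & G2 a = B']) ->
  fam_coef w a B = fam_coef w a B'.
Proof.
by case=> G1 [G2 [tG1 tG2 agree <- <-]]; have := fam_coef_agree tG1 tG2 agree; rewrite !big_set1.
Qed.

(* Exchanges at a single node make w constant on the high families of each a in C and
   zero elsewhere; transpositions make the constant independent of a. *)
Lemma tight_const_multiple : exists lam, forall x, w x = lam * o x.
Proof.
have [a0 a0C] : exists a0, a0 \in C.
  by apply/set0Pn; rewrite -card_gt0 (leq_trans _ k_ltC).
have high_same a B B' : a \in C -> a \notin B -> a \notin B' ->
    (k <= #|B :&: C|)%N -> (k <= #|B' :&: C|)%N -> fam_coef w a B = fam_coef w a B'.
  by move=> *; apply: fam_coef_exchange; apply: exchange_high.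
pose lam := fam_coef w a0 (C :\ a0).
have high_C0 := high_setD1 a0C.
have high_lam a B : a \in C -> a \notin B -> (k <= #|B :&: C|)%N -> fam_coef w a B = lam.
  move=> aC aB kB; have [aa0 | aa0] := eqVneq a a0.
    by subst a; apply: high_same; rewrite ?inE ?eqxx.
  have [G1 [G2 [[tG1 tG2 agree G1a0 G2a] /andP[/andP[_ kG1] /andP[_ kG2]]]]] :=
    exchange_transposition k_gt0 k_ltC aC a0C aa0.
  have := fam_coef_agree tG1 tG2 agree.
  rewrite !big_setU1 ?inE // !big_set1 G1a0 G2a !fam_coef0 !Monoid.simpm.
  move=> eq_a; have [/andP[dagG1 _] /andP[dagG2 _]] := conj tG1 tG2.
  rewrite (high_same a B (G1 a)) ?DAG_irrefl // eq_a.
  by apply: high_same; rewrite ?DAG_irrefl ?inE ?eqxx.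
have low_zero a B : a \notin B -> ~~ ((a \in C) && (k <= #|B :&: C|)%N) -> fam_coef w a B = 0.
  move=> aB; have [aC /= |aC _] := boolP (a \in C).
    rewrite -ltnNge => ltBk; rewrite -(fam_coef0 w a).
    by apply/esym/fam_coef_exchange; apply: exchange_low.
  by rewrite -(fam_coef0 w a); apply/esym/fam_coef_exchange; apply: exchange_outside.
exists lam => x; rewrite -fam_coef_val /cluster_obj; have /andP[_ xUps] := valP x.
case: ifP => [/andP[aC kB] | notHigh]; first by rewrite mulr1 high_lam.
by rewrite mulr0 low_zero ?notHigh.
Qed.

End TightConstant.

End ClusterInequality.

Lemma rank_annihilated (R : fieldType) m p (A : 'M[R]_(m, p + 1)) (y : 'cV_(p + 1)) :
  y != 0 -> A *m y = 0 -> (\rank A <= p)%N.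
Proof.
move=> y_nz Ay0.
have yker : (y^T <= kermx A^T)%MS by apply/sub_kermxP; rewrite -trmx_mul Ay0 trmx0.
have rank_y : (0 < \rank y^T)%N by rewrite lt0n mxrank_eq0 trmx_eq0.
by have := mxrankS yker; rewrite mxrank_ker mxrank_tr; lia.
Qed.

Lemma rank_kernel_line (R : fieldType) m p (A : 'M[R]_(m, p + 1)) (y0 : 'cV_(p + 1)) :
  (forall y, A *m y = 0 -> exists lam, y = lam *: y0) -> (p <= \rank A)%N.
Proof.
move=> ker_line.
have ker_sub : (kermx A^T <= y0^T)%MS.
  apply/row_subP => i; have /sub_kermxP zA := row_sub i (kermx A^T).
  have Az : A *m (row i (kermx A^T))^T = 0 by apply: trmx_inj; rewrite trmx_mul trmxK zA trmx0.
  have [lam /(congr1 trmx)] := ker_line _ Az; rewrite trmxK => ->.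
  by rewrite linearZ scalemx_sub.
have := mxrankS ker_sub; rewrite mxrank_ker mxrank_tr.
by have := rank_leq_row y0^T; lia.
Qed.

Section AffineRank.
Variable N : finType.
Variable R : realFieldType.
Notation n := #|{: Ups N}|.
Implicit Types (S : vec N R -> Prop) (o w : vec N R).

Definition row_of w : 'rV[R]_n := \row_j w (enum_val j).
Definition col_of w : 'cV[R]_n := \col_j w (enum_val j).
Definition vec_of_col (y : 'cV[R]_n) : vec N R := fun x => y (enum_rank x) 0.

(* Rows are the points in homogeneous coordinates: affine independence becomes row-freeness. *)
Definition hom_mx m (p : 'I_m -> vec N R) : 'M[R]_(m, n + 1) :=
  row_mx (\matrix_i row_of (p i)) (const_mx 1).

Lemma dot_enum o w : dot o w = \sum_(j < n) o (enum_val j) * w (enum_val j).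
Proof.
rewrite /dot (reindex (@enum_val _ (pred_of_simpl predT))) //.
by exists enum_rank => x _; rewrite ?enum_valK ?enum_rankK.
Qed.

Lemma hom_mx_mulE m (p : 'I_m -> vec N R) (y : 'cV_n) (t : 'cV_1) i :
  (hom_mx p *m col_mx y t) i 0 = dot (vec_of_col y) (p i) + t 0 0.
Proof.
rewrite mul_row_col !mxE dot_enum big_ord1 !mxE mul1r; congr (_ + _).
by apply: eq_bigr => j _; rewrite !mxE /vec_of_col enum_valK mulrC.
Qed.

Lemma hom_mx_lmul_eq0 m (p : 'I_m -> vec N R) (c : 'rV_m) :
  (c *m hom_mx p == 0) = (\sum_i c 0 i == 0) && [forall x, \sum_i c 0 i * p i x == 0].
Proof.
rewrite mul_mx_row row_mx_eq0 andbC; congr (_ && _).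
  apply/eqP/eqP => [/matrixP/(_ 0 0)|sum0].
    by rewrite !mxE => e; rewrite -[RHS]e; apply: eq_bigr => i _; rewrite !mxE mulr1.
  by apply/matrixP => i j; rewrite !ord1 !mxE -[RHS]sum0; apply: eq_bigr => i' _; rewrite mxE mulr1.
apply/eqP/forallP => [/rowP cp0 x | cp0].
  have := cp0 (enum_rank x); rewrite !mxE => e; apply/eqP; rewrite -[RHS]e.
  by apply: eq_bigr => i _; rewrite !mxE enum_rankK.
apply/rowP => j; rewrite !mxE -[RHS](eqP (cp0 (enum_val j))).
by apply: eq_bigr => i _; rewrite !mxE.
Qed.

Lemma has_aff_indepP S m :
  has_aff_indep S m <-> exists p : 'I_m -> vec N R, (forall i, S (p i)) /\ row_free (hom_mx p).
Proof.
split=> -[p [Sp p_indep]]; exists p; split=> //.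
  apply/inj_row_free => c /eqP; rewrite hom_mx_lmul_eq0 => /andP[/eqP sum0 /forallP sump0].
  by apply/rowP => i; rewrite mxE; apply: p_indep => // x; apply/eqP.
move=> c sum0 sump0 i.
have : (\row_i c i) *m hom_mx p == 0.
  rewrite hom_mx_lmul_eq0; apply/andP; split; last apply/forallP => x; apply/eqP.
    by rewrite -[RHS]sum0; apply: eq_bigr => j _; rewrite mxE.
  by rewrite -[RHS](sump0 x); apply: eq_bigr => j _; rewrite mxE.
by rewrite mulmx_free_eq0 // => /eqP/rowP/(_ i); rewrite !mxE.
Qed.

Lemma hom_mx_mul_hyperplane m (p : 'I_m -> vec N R) o u i :
  (hom_mx p *m col_mx (col_of o) (-u)%:M) i 0 = dot o (p i) - u.
Proof.
rewrite hom_mx_mulE !mxE /= mulr1n; congr (_ - _).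
by apply: eq_bigr => x _; rewrite /vec_of_col mxE enum_rankK.
Qed.

Lemma col_hyperplane_neq0 o u : (exists x, o x != 0) -> col_mx (col_of o) (-u)%:M != 0.
Proof.
case=> x ox; rewrite col_mx_eq0 negb_and; apply/orP; left.
by apply: contra ox => /eqP/colP/(_ (enum_rank x)); rewrite !mxE enum_rankK => ->.
Qed.

Lemma not_aff_indep_dim S : ~ has_aff_indep S n.+2.
Proof. by case/has_aff_indepP => p [_ /eqP rank_p]; have := rank_leq_col (hom_mx p); lia. Qed.

Lemma hyperplane_not_aff_indep S o u : (exists x, o x != 0) ->
  (forall v, S v -> dot o v = u) -> ~ has_aff_indep S n.+1.
Proof.
move=> o_nz S_u /has_aff_indepP[p [Sp /eqP rank_p]].
have Ay0 : hom_mx p *m col_mx (col_of o) (-u)%:M = 0.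
  by apply/matrixP => i j; rewrite ord1 hom_mx_mul_hyperplane S_u // subrr mxE.
by have := rank_annihilated (col_hyperplane_neq0 u o_nz) Ay0; rewrite rank_p ltnn.
Qed.

(* The kernel of hom_mx q is the line spanned by the normal col_mx (col_of o) (-u)%:M. *)
Lemma hyperplane_aff_indep S o u M (q : 'I_M -> vec N R) (i0 : 'I_M) :
  (exists x, o x != 0) -> (forall i, S (q i)) -> (forall i, dot o (q i) = u) ->
  (forall w t, (forall i, dot w (q i) = t) -> exists lam, forall x, w x = lam * o x) ->
  has_aff_indep S n.
Proof.
move=> o_nz Sq q_u q_orth; set A := hom_mx q; set y0 := col_mx (col_of o) (-u)%:M.
have Ay0 : A *m y0 = 0.
  by apply/matrixP => i j; rewrite ord1 hom_mx_mul_hyperplane q_u subrr mxE.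
have rank_le := rank_annihilated (col_hyperplane_neq0 u o_nz) Ay0.
have rank_ge : (n <= \rank A)%N.
  apply: (rank_kernel_line (y0 := y0)) => y Ay.
  have Ay_i i : dot (vec_of_col (usubmx y)) (q i) = - dsubmx y 0 0.
    have := hom_mx_mulE q (usubmx y) (dsubmx y) i; rewrite vsubmxK.
    by have /matrixP/(_ i 0) := Ay; rewrite [RHS]mxE => -> /esym/eqP; rewrite addr_eq0 => /eqP.
  have [lam w_lam] := q_orth _ _ Ay_i.
  exists lam; rewrite -[y]vsubmxK scale_col_mx; congr col_mx.
    apply/colP => j; have := w_lam (enum_val j); rewrite /vec_of_col enum_valK => ->.
    by rewrite !mxE.
  have dot_lam : dot (vec_of_col (usubmx y)) (q i0) = lam * u.
    by rewrite -(q_u i0) /dot mulr_sumr; apply: eq_bigr => x _; rewrite w_lam mulrA.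
  apply/matrixP => i j; rewrite !ord1 [RHS]mxE [(-u)%:M _ _]mxE /= mulr1n.
  by rewrite mulrN -dot_lam Ay_i opprK.
have rank_A : \rank A = n by apply/eqP; rewrite eqn_leq rank_le rank_ge.
suff : has_aff_indep S (\rank A) by rewrite rank_A.
apply/has_aff_indepP; exists (q \o maxrankfun A); split=> [i|]; first exact: Sq.
suff -> : hom_mx (q \o maxrankfun A) = rowsub (maxrankfun A) A by exact: maxrowsub_free.
by apply/matrixP => i j; rewrite /A /hom_mx !mxE; case: splitP => j' _; rewrite !mxE.
Qed.

End AffineRank.

Section PolytopeDimension.
Variable N : finType.
Variable R : realFieldType.
Notation n := #|{: Ups N}|.

Definition single_parent_graph (x : Ups N) : graph N :=
  [ffun v => if v == (val x).1 then (val x).2 else set0].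

Lemma single_parent_graph_DAG x : is_DAG (single_parent_graph x).
Proof.
apply: (@rank_DAG _ _ (fun v => nat_of_bool (v == (val x).1))) => u v; rewrite ffunE.
case: eqVneq => [_|]; last by rewrite inE.
by case/andP: (valP x) => _ /negP notin_x /= ux; case: eqVneq ux => // -> /notin_x.
Qed.

Lemma eta_single_parent_graph x y : Defs.eta R (single_parent_graph x) y = (y == x)%:R.
Proof.
rewrite /Defs.eta ffunE -[y == x](inj_eq val_inj); move: (valP y).
case: (val y) => b D /andP[D0 _]; case: (val x) => a B; rewrite xpair_eqE.
rewrite -[(b, D).2]/D -[(a, B).2]/B -[(b, D).1]/b -[(a, B).1]/a.
by case: (b == a); [case: (D == B) | rewrite (negbTE D0)].
Qed.

Definition empty_graph : graph N := [ffun=> set0].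

Lemma eta_empty_graph y : Defs.eta R empty_graph y = 0.
Proof. by rewrite /Defs.eta ffunE; case/andP: (valP y) => /negbTE->. Qed.

(* The empty graph and the graphs with a single nonempty parent set: their vectors are 0
   and the unit vectors. *)
Lemma PN_aff_indep : has_aff_indep (@P_N N R) n.+1.
Proof.
pose p (i : 'I_n.+1) :=
  if unlift ord0 i is Some j then Defs.eta R (single_parent_graph (enum_val j))
  else Defs.eta R empty_graph.
exists p; split=> [i|c sum0 sump0].
  rewrite /p; case: unlift => [j|]; apply: eta_PN; first exact: single_parent_graph_DAG.
  by apply: (@rank_DAG _ _ (fun=> 0%N)) => u v; rewrite ffunE inE.
have c_lift j : c (lift ord0 j) = 0.
  have := sump0 (enum_val j); rewrite big_ord_recl /p unlift_none eta_empty_graph mulr0 add0r.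
  rewrite (bigD1 j) //= liftK eta_single_parent_graph eqxx mulr1 big1 ?addr0 // => j' j'j.
  by rewrite liftK eta_single_parent_graph (inj_eq enum_val_inj) eq_sym (negbTE j'j) mulr0.
move=> i; case: (unliftP ord0 i) => [j -> //|->].
by move: sum0; rewrite big_ord_recl big1 ?addr0 // => j _; apply: c_lift.
Qed.

Lemma PN_aff_rank : aff_rank (@P_N N R) n.+1.
Proof. by split; [exact: PN_aff_indep | exact: not_aff_indep_dim]. Qed.

End PolytopeDimension.

Section ClusterFacet.
Variable N : finType.
Variable R : realFieldType.
Variable C : {set N}.
Variable k : nat.
Hypothesis k_gt0 : (0 < k)%N.
Hypothesis k_ltC : (k < #|C|)%N.
Notation o := (cluster_obj R C k).
Notation u := ((#|C| - k)%:R : R).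

Lemma cluster_face_aff_rank : aff_rank (face_of o u) #|{: Ups N}|.
Proof.
split; last first.
  by apply: (hyperplane_not_aff_indep (u := u) (cluster_obj_neq0 R k_gt0 k_ltC)) => v [].
set G0 := order_dag C k (enum C).
have tight_G0 : tight C k G0 by apply: order_dag_tight => //; [exact: enum_uniq | exact: mem_enum].
pose pick (i : 'I_#|{: graph N}|) := if tight C k (enum_val i) then enum_val i else G0.
have tight_pick i : tight C k (pick i) by rewrite /pick; case: ifP.
apply: (@hyperplane_aff_indep _ _ _ o u _ (fun i => Defs.eta R (pick i)) (enum_rank G0)).
- exact: cluster_obj_neq0.
- by move=> i; apply: tight_face.
- by move=> i; case: (tight_face R k_gt0 (tight_pick i)).
move=> w t w_t; apply: (tight_const_multiple k_gt0 k_ltC (t := t)) => G tG.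
by have := w_t (enum_rank G); rewrite /pick enum_rankK tG.
Qed.

End ClusterFacet.

Theorem corollary4 (N : finType) (R : realFieldType) (C : {set N}) (k : nat) :
  (2 <= #|C|)%N -> (1 <= k)%N -> (k <= #|C| - 1)%N ->
  valid_ineq (cluster_obj R C k) (#|C| - k)%:R /\
  is_SE_facet (face_of (cluster_obj R C k) (#|C| - k)%:R).
Proof.
move=> C2 k_gt0 kC1; have k_ltC : (k < #|C|)%N by lia.
have valid := @cluster_valid N R C k k_gt0.
split=> //; split; last by exists (cluster_obj R C k), (#|C| - k)%:R; split; [exact: cluster_SE|].
split; first by exists (cluster_obj R C k), (#|C| - k)%:R.
exists #|{: Ups N}|; split; [exact: PN_aff_rank | exact: cluster_face_aff_rank].
Qed.
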